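(* Let $M(z)=\frac{1-z-\sqrt{1-2z-3z^2}}{2z^2}$ be the Motzkin generating function and let $v=v(z)=zM(z)$, so that $v$ is the power series with $v(0)=0$ satisfying $z=\frac{v}{1+v+v^2}$. Define formal power series $G_k(z)$, $k\ge1$, by $G_1=z$ and $$G_{k+1}=\frac{z}{1-\dfrac{zG_k}{1-G_k}}\qquad (k\ge1),$$ and set $F_k=\frac{zG_k}{1-G_k}$. Then for all $k\ge1$, $$G_k=\frac{v}{1+v}\cdot\frac{1-v^{2k}}{1-v^{2k+1}},\qquad F_k=\frac{v^2}{1+v+v^2}\cdot\frac{1-v^{2k}}{1-v^{2k+2}}.$$ Moreover, $F_k$ is the generating function, by number of nodes, of plane trees with at least two nodes in which every leaf lies at odd depth and whose height (maximal depth of a node) is at most $2k-1$.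
   Context: Plane trees are ordered rooted trees; depth of the root is $0$; the height of a tree is the maximal depth of its nodes (number of edges on a longest root-to-node path). Power series are in the variable $z$ marking the number of nodes. *)

From mathcomp Require Import all_boot all_order all_algebra.
Set Implicit Arguments. Unset Strict Implicit. Unset Printing Implicit Defensive.
Import Order.TTheory GRing.Theory Num.Theory.
Local Open Scope ring_scope.

Definition fps := nat -> rat.

Definition fconst (c : rat) : fps := fun n => if n == 0%N then c else 0.
Definition fX : fps := fun n => if n == 1%N then 1 else 0.
Definition fadd (f g : fps) : fps := fun n => f n + g n.
Definition fopp (f : fps) : fps := fun n => - f n.
Definition fsub (f g : fps) : fps := fadd f (fopp g).
Definition fmul (f g : fps) : fps := fun n => \sum_(i < n.+1) f i * g (n - i)%N.
Fixpoint fpow (f : fps) (m : nat) : fps :=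
  if m is m'.+1 then fmul f (fpow f m') else fconst 1.

(* first n+1 coefficients of the multiplicative inverse of f
   (meaningful when f 0 != 0):  g_0 = 1/f_0,
   g_m = -(1/f_0) * sum_{i=1..m} f_i g_{m-i}. *)
Fixpoint finv_list (f : fps) (n : nat) : seq rat :=
  if n is m.+1 then
    let l := finv_list f m in
    rcons l (- (f 0%N)^-1 * \sum_(1 <= i < m.+2) f i * nth 0 l (m.+1 - i)%N)
  else [:: (f 0%N)^-1].
Definition finv (f : fps) : fps := fun n => nth 0 (finv_list f n) n.
Definition fdiv (f g : fps) : fps := fmul f (finv g).

(* Gs n = G_{n+1} *)
Fixpoint Gs (n : nat) : fps :=
  if n is m.+1 then
    fdiv fX (fsub (fconst 1) (fdiv (fmul fX (Gs m)) (fsub (fconst 1) (Gs m))))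
  else fX.
Definition G (k : nat) : fps := Gs k.-1.
Definition F (k : nat) : fps := fdiv (fmul fX (G k)) (fsub (fconst 1) (G k)).

Inductive ptree : Type := Node of seq ptree.

Fixpoint tsize (t : ptree) : nat :=
  let: Node ts := t in (sumn (map tsize ts)).+1.

Fixpoint theight (t : ptree) : nat :=
  let: Node ts := t in
  if ts is [::] then 0%N else (foldr maxn 0%N (map theight ts)).+1.

Fixpoint leaves_odd_from (d : nat) (t : ptree) : bool :=
  let: Node ts := t in
  if ts is [::] then odd d else all (leaves_odd_from d.+1) ts.

Definition leaves_odd (t : ptree) : bool := leaves_odd_from 0 t.

Definition counted (k n : nat) (t : ptree) : Prop :=
  [/\ tsize t = n, (2 <= tsize t)%N, leaves_odd t & (theight t <= 2 * k - 1)%N].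

From Pilot Require Import Defs.
From mathcomp Require Import all_boot all_order all_algebra.
Import GRing.Theory Num.Theory.
Local Open Scope ring_scope.
From HB Require Import structures.
From Stdlib Require Import Ring FunctionalExtensionality Lia.
From Stdlib Require List.
From mathcomp Require Import zify.

(* With Q = 1 + v + v^2 and z = v/Q one proves, by induction on
   k, the identities with cleared denominators
       G_k (1+v)(1 - v^(2k+1)) = v (1 - v^(2k)),
       F_k Q (1 - v^(2k+2))   = v^2 (1 - v^(2k)),
   each of the steps G_k -> F_k -> G_(k+1) being a polynomial identity in v.

   Trees.  [trees h b n] lists without repetition the trees of size n and
   height < h whose leaves all lie at odd depth when the root lies at depth b.
   Such a tree is a root above a forest of trees of the opposite parity, which
   must be nonempty when b is even.  Since forests have series 1/(1 - T), the
   counting series satisfy T(h+1, odd) = z/(1 - T(h, even)) and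
   T(h+1, even) = z T(h, odd)/(1 - T(h, odd)): these are the recursions of
   G_k and F_k, so that the series of [trees (2k) false] is F_k. *)

(* Importing all_boot again would let fingraph's [finv] and tuple's [tsize]
   shadow the series inverse and the tree size of Defs. *)
Local Notation finv := Defs.finv.
Local Notation tsize := Defs.tsize.

Lemma fps_ext (f g : fps) : (forall n, f n = g n) -> f = g.
Proof. exact: functional_extensionality. Qed.

(* The truncation of f to a polynomial of degree n: the coefficients of index
   at most n of a product only depend on the truncations of the factors. *)
Definition trunc (n : nat) (f : fps) : {poly rat} := \poly_(i < n.+1) f i.

Lemma fmul_trunc {n m} f g : (m <= n)%N -> fmul f g m = (trunc n f * trunc n g)`_m.
Proof.
move=> le_mn; rewrite coefM /fmul; apply: eq_bigr => i _.
have lt_in : (i < n.+1)%N by apply: leq_trans (ltn_ord i) _; rewrite ltnS.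
rewrite !coef_poly lt_in ifT // ltnS; exact: leq_trans (leq_subr _ _) le_mn.
Qed.

Lemma trunc_fmul n f g i :
  (i <= n)%N -> (trunc n (fmul f g))`_i = (trunc n f * trunc n g)`_i.
Proof. by move=> le_in; rewrite coef_poly ltnS le_in (fmul_trunc _ _ le_in). Qed.

Lemma coefMr_eq {p q : {poly rat}} (r : {poly rat}) {n} :
  (forall i, (i <= n)%N -> p`_i = q`_i) -> (r * p)`_n = (r * q)`_n.
Proof. by move=> epq; rewrite !coefM; apply: eq_bigr => i _; rewrite epq // leq_subr. Qed.

Lemma fmulA f g h : fmul f (fmul g h) = fmul (fmul f g) h.
Proof.
apply: fps_ext => n; rewrite (fmul_trunc _ _ (leqnn n)) [RHS](fmul_trunc _ _ (leqnn n)).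
rewrite (coefMr_eq _ (trunc_fmul _ _ _)) [in RHS]mulrC (coefMr_eq _ (trunc_fmul _ _ _)).
by rewrite [in RHS]mulrC mulrA.
Qed.

Lemma fmulC f g : fmul f g = fmul g f.
Proof. by apply: fps_ext => n; rewrite !(fmul_trunc _ _ (leqnn n)) mulrC. Qed.

Lemma fmul1 f : fmul (fconst 1) f = f.
Proof.
apply: fps_ext => n; rewrite /fmul big_ord_recl /fconst /= mul1r subn0 big1 ?addr0 //.
by move=> i _; rewrite mul0r.
Qed.

Lemma fmulDl f g h : fmul (fadd f g) h = fadd (fmul f h) (fmul g h).
Proof.
apply: fps_ext => n; rewrite /fmul /fadd -big_split.
by apply: eq_bigr => i _; rewrite mulrDl.
Qed.

Lemma fps_ring_theory :
  ring_theory (fconst 0) (fconst 1) fadd fmul fsub fopp (@eq fps).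
Proof.
constructor => //.
- by move=> f; apply: fps_ext => n; rewrite /fadd /fconst; case: (n == 0%N); rewrite add0r.
- by move=> f g; apply: fps_ext => n; rewrite /fadd addrC.
- by move=> f g h; apply: fps_ext => n; rewrite /fadd addrA.
- exact: fmul1.
- exact: fmulC.
- exact: fmulA.
- exact: fmulDl.
- by move=> f; apply: fps_ext => n; rewrite /fadd /fopp /fconst subrr; case: (n == 0%N).
Qed.

Add Ring fps_ring : fps_ring_theory.

Lemma fmul_coef0 f g : fmul f g 0%N = f 0%N * g 0%N.
Proof. by rewrite /fmul big_ord1. Qed.

Lemma size_finv_list f n : size (finv_list f n) = n.+1.
Proof. by elim: n => //= n IH; rewrite size_rcons IH. Qed.

Lemma nth_finv_list f n i : (i <= n)%N -> nth 0 (finv_list f n) i = finv f i.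
Proof.
elim: n => [|n IH]; first by rewrite leqn0 => /eqP ->.
rewrite leq_eqVlt => /orP [/eqP -> //| lt_in].
by rewrite /= nth_rcons size_finv_list lt_in IH.
Qed.

Lemma finvS f m : finv f m.+1 =
  - (f 0%N)^-1 * \sum_(1 <= i < m.+2) f i * finv f (m.+1 - i)%N.
Proof.
rewrite /finv /= nth_rcons size_finv_list ltnn eqxx; congr (_ * _).
apply: eq_big_nat => i /andP [i_gt0 lt_i]; rewrite nth_finv_list //.
by case: i i_gt0 lt_i => // i _ _; rewrite subSS leq_subr.
Qed.

Lemma fmul_finv {f} : f 0%N != 0 -> fmul f (finv f) = fconst 1.
Proof.
move=> f0; apply: fps_ext => [[|m]]; first by rewrite fmul_coef0 /finv /= mulfV.
rewrite /fmul /fconst /= -(big_mkord xpredT (fun i => f i * finv f (m.+1 - i)%N)).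
by rewrite big_ltn // finvS mulrA mulrN mulfV // mulN1r addNr.
Qed.

Lemma fmulIr {c f g : fps} : c 0%N != 0 -> fmul f c = fmul g c -> f = g.
Proof.
move=> c0 e; have ci := fmul_finv c0.
have -> : f = fmul (fmul f c) (finv c) by rewrite -fmulA ci; ring.
by rewrite e -fmulA ci; ring.
Qed.

Lemma fdivK (f g : fps) : g 0%N != 0 -> fmul (fdiv f g) g = f.
Proof. by move=> g0; rewrite /fdiv -fmulA (fmulC _ g) fmul_finv //; ring. Qed.

Lemma finv_uniq f g : f 0%N != 0 -> fmul f g = fconst 1 -> g = finv f.
Proof.
move=> f0 e; apply: (fmulIr f0).
by rewrite fmulC e (fmulC (finv f)) fmul_finv.
Qed.

Lemma finv1 : finv (fconst 1) = fconst 1.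
Proof. by apply/esym/finv_uniq; rewrite ?fmul1 // oner_neq0. Qed.

Lemma fdiv_cross {x a b p q : fps} : a 0%N != 0 -> b 0%N != 0 ->
  fmul x (fmul a b) = fmul p q -> x = fmul (fdiv p a) (fdiv q b).
Proof.
move=> a0 b0 e; have ab0 : fmul a b 0%N != 0 by rewrite fmul_coef0 mulf_neq0.
apply: (fmulIr ab0); rewrite e.
have -> : fmul (fmul (fdiv p a) (fdiv q b)) (fmul a b) =
  fmul (fmul (fdiv p a) a) (fmul (fdiv q b) b) by ring.
by rewrite !fdivK.
Qed.

Lemma one_sub_coef0 f : f 0%N = 0 -> fsub (fconst 1) f 0%N != 0.
Proof. by move=> f0; rewrite /fsub /fadd /fopp f0 oppr0 addr0 oner_neq0. Qed.

Lemma fmulX_coef0 f : fmul fX f 0%N = 0.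
Proof. by rewrite fmul_coef0 mul0r. Qed.

Lemma fmulX_coefS f m : fmul fX f m.+1 = f m.
Proof.
rewrite /fmul big_ord_recl big_ord_recl big1 => [|i _]; last by rewrite /fX mul0r.
by rewrite /fX /= mul0r mul1r add0r addr0 subSS subn0.
Qed.

Lemma Gs_coef0 j : Gs j 0%N = 0.
Proof. by case: j => [|j] //=; rewrite /fdiv fmulX_coef0. Qed.

Lemma F_coef0 k : F k 0%N = 0.
Proof. by rewrite /F /fdiv fmul_coef0 fmulX_coef0 mul0r. Qed.

Section ClosedForms.
Variable v : fps.
Hypothesis v0 : v 0%N = 0.
Let Q := fadd (fadd (fconst 1) v) (fpow v 2).
Hypothesis z_def : fX = fdiv v Q.

Lemma Q_coef0 : Q 0%N = 1.
Proof. by rewrite /Q /fadd /= fmul_coef0 v0 mul0r !addr0. Qed.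

Lemma zQ : fmul fX Q = v.
Proof. by rewrite z_def fdivK // Q_coef0 oner_neq0. Qed.

Lemma one_add_v_coef0 : fadd (fconst 1) v 0%N != 0.
Proof. by rewrite /fadd v0 addr0 oner_neq0. Qed.

Lemma fpow_coef0 n : fpow v n.+1 0%N = 0.
Proof. by rewrite /= fmul_coef0 v0 mul0r. Qed.

(* With a = v^(2k): from the closed form of G_k, the one of F_k = z G_k/(1-G_k),
   because (1 - G_k)(1+v)(1 - v^(2k+1)) = 1 - v^(2k+2). *)
Lemma closed_F_of_G {g a : fps} : g 0%N = 0 ->
  fmul g (fmul (fadd (fconst 1) v) (fsub (fconst 1) (fmul v a)))
    = fmul v (fsub (fconst 1) a) ->
  fmul (fdiv (fmul fX g) (fsub (fconst 1) g))
       (fmul Q (fsub (fconst 1) (fmul v (fmul v a))))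
    = fmul (fpow v 2) (fsub (fconst 1) a).
Proof.
move=> g0 eG.
set P := fmul (fadd (fconst 1) v) (fsub (fconst 1) (fmul v a)).
have eW : fmul (fsub (fconst 1) g) P = fsub (fconst 1) (fmul v (fmul v a)).
  have -> : fmul (fsub (fconst 1) g) P = fsub P (fmul g P) by ring.
  by rewrite eG /P; ring.
rewrite -eW.
have -> : forall f, fmul f (fmul Q (fmul (fsub (fconst 1) g) P)) =
    fmul (fmul f (fsub (fconst 1) g)) (fmul Q P) by move=> f; ring.
rewrite fdivK ?one_sub_coef0 //.
have -> : fmul (fmul fX g) (fmul Q P) = fmul (fmul fX Q) (fmul g P) by ring.
by rewrite zQ eG /=; ring.
Qed.

(* With a = v^(2k): from the closed form of F_k, the one of G_(k+1) = z/(1-F_k),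
   because (1 - F_k)(1+v+v^2)(1 - v^(2k+2)) = (1+v)(1 - v^(2k+3)). *)
Lemma closed_G_of_F {f a : fps} : f 0%N = 0 ->
  fmul f (fmul Q (fsub (fconst 1) (fmul v (fmul v a))))
    = fmul (fpow v 2) (fsub (fconst 1) a) ->
  fmul (fdiv fX (fsub (fconst 1) f))
       (fmul (fadd (fconst 1) v) (fsub (fconst 1) (fmul v (fmul v (fmul v a)))))
    = fmul v (fsub (fconst 1) (fmul v (fmul v a))).
Proof.
move=> f0 eF.
set D := fsub (fconst 1) (fmul v (fmul v a)).
have eU : fmul (fsub (fconst 1) f) (fmul Q D) =
    fmul (fadd (fconst 1) v) (fsub (fconst 1) (fmul v (fmul v (fmul v a)))).
  have -> : fmul (fsub (fconst 1) f) (fmul Q D) =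
    fsub (fmul Q D) (fmul f (fmul Q D)) by ring.
  by rewrite eF /D /Q /=; ring.
rewrite -eU.
have -> : forall g, fmul g (fmul (fsub (fconst 1) f) (fmul Q D)) =
    fmul (fmul g (fsub (fconst 1) f)) (fmul Q D) by move=> g; ring.
by rewrite fdivK ?one_sub_coef0 // fmulA zQ.
Qed.

Lemma closed_G j :
  fmul (G j.+1) (fmul (fadd (fconst 1) v) (fsub (fconst 1) (fpow v (2 * j.+1).+1)))
    = fmul v (fsub (fconst 1) (fpow v (2 * j.+1))).
Proof.
elim: j => [|j IH].
  have -> : fmul (G 1) (fmul (fadd (fconst 1) v) (fsub (fconst 1) (fpow v 3))) =
     fmul (fmul fX Q) (fsub (fconst 1) (fpow v 2)) by rewrite /G /Q /=; ring.
  by rewrite zQ.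
have -> : (2 * j.+2 = (2 * j.+1).+2)%N by rewrite mulnS.
exact: (closed_G_of_F (F_coef0 _) (closed_F_of_G (Gs_coef0 _) IH)).
Qed.

Lemma closed_F j :
  fmul (F j.+1) (fmul Q (fsub (fconst 1) (fpow v (2 * j.+1).+2)))
    = fmul (fpow v 2) (fsub (fconst 1) (fpow v (2 * j.+1))).
Proof. exact: closed_F_of_G (Gs_coef0 _) (closed_G j). Qed.

End ClosedForms.

Fixpoint ptree_ind_all (P : ptree -> Prop)
  (IH : forall ts, List.Forall P ts -> P (Node ts)) (t : ptree) : P t :=
  let: Node ts := t in
  IH ts ((fix forall_subtrees (ts : seq ptree) : List.Forall P ts :=
            if ts is t :: ts' then
              List.Forall_cons t (ptree_ind_all P IH t) (forall_subtrees ts')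
            else List.Forall_nil P) ts).

Fixpoint ptree_encode (t : ptree) : GenTree.tree unit :=
  let: Node ts := t in GenTree.Node 0 (map ptree_encode ts).
Fixpoint ptree_decode (t : GenTree.tree unit) : ptree :=
  if t is GenTree.Node _ ts then Node (map ptree_decode ts) else Node [::].
Lemma ptree_encodeK : cancel ptree_encode ptree_decode.
Proof. by elim/ptree_ind_all => ts IH /=; congr Node; elim: IH => //= t ts' -> _ ->. Qed.
HB.instance Definition _ := Equality.copy ptree (can_type ptree_encodeK).

Lemma Node_inj : injective Node. Proof. by move=> ts ts' []. Qed.

Lemma tsize_gt0 t : (0 < tsize t)%N. Proof. by case: t. Qed.

Lemma leaves_odd_node d ts : leaves_odd_from d (Node ts) =
  (odd d || (ts != [::])) && all (leaves_odd_from d.+1) ts.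
Proof. by case: ts => /= [|t ts]; rewrite ?orbF ?andbT ?orbT. Qed.

Lemma leaves_odd_parity d t : leaves_odd_from d t = leaves_odd_from (odd d) t.
Proof.
elim/ptree_ind_all: t d => ts IH d; rewrite !leaves_odd_node oddb; congr (_ && _).
by elim: IH => //= c cs IHc _ ->; rewrite IHc [in RHS]IHc /= oddb.
Qed.

Lemma leaves_odd_succ (b : bool) t : leaves_odd_from b.+1 t = leaves_odd_from (~~ b) t.
Proof. by rewrite leaves_odd_parity /= oddb. Qed.

Lemma leaves_odd_size t : leaves_odd t -> (2 <= tsize t)%N.
Proof.
case: t => -[|c cs] //= _; have := tsize_gt0 c.
by rewrite !ltnS addn_gt0 => ->.
Qed.

Lemma height_node ts h :
  (theight (Node ts) < h.+1)%N = all (fun t => theight t < h)%N ts.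
Proof.
case: ts => //= t ts; rewrite ltnS.
elim: ts t => [|c cs IH] t /=; first by rewrite maxn0 andbT.
by rewrite gtn_max IH.
Qed.

Definition count_series {T : Type} (c : nat -> seq T) : fps :=
  fun n => (size (c n))%:R.

Lemma uniq_enumeration (T : eqType) (x0 : T) (s : seq T) : uniq s ->
  injective (fun i : 'I_(size s) => nth x0 s i) /\
  (forall x, x \in s <-> exists i : 'I_(size s), nth x0 s i = x).
Proof.
move=> s_uniq; split.
  by move=> i j /eqP; rewrite nth_uniq // => /eqP /val_inj.
move=> x; split => [x_in | [i <-]]; last exact: mem_nth.
have x_idx : (index x s < size s)%N by rewrite index_mem.
by exists (Ordinal x_idx); rewrite /= nth_index.
Qed.

Lemma sized_nil0 {c : nat -> seq ptree} :
  (forall n t, t \in c n -> tsize t = n) -> c 0 = [::].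
Proof.
move=> c_size; case def_c0: (c 0) => [//|t s]; have := c_size 0 t.
by rewrite def_c0 mem_head => /(_ isT) t_size; have := tsize_gt0 t; rewrite t_size.
Qed.

Section Forests.
Variable cls : nat -> seq ptree.

(* Forests (sequences of trees of the class) of total size m, listed by the
   size i.+1 of the first tree; the fuel argument bounds the recursion. *)
Fixpoint forests_fuel (fuel m : nat) : seq (seq ptree) :=
  if m is m'.+1 then
    if fuel is fuel'.+1 then
      flatten [seq [seq t :: ts | t <- cls i.+1, ts <- forests_fuel fuel' (m' - i)]
              | i <- iota 0 m]
    else [::]
  else [:: [::]].
Definition forests (m : nat) : seq (seq ptree) := forests_fuel m m.

Lemma forests_fuelS f m : forests_fuel f.+1 m.+1 =
  flatten [seq [seq t :: ts | t <- cls i.+1, ts <- forests_fuel f (m - i)]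
          | i <- iota 0 m.+1].
Proof. by []. Qed.

Lemma forests_fuel_enough f1 f2 m :
  (m <= f1)%N -> (m <= f2)%N -> forests_fuel f1 m = forests_fuel f2 m.
Proof.
elim: f1 f2 m => [|f1 IH] [|f2] [|m] // le1 le2; rewrite !forests_fuelS.
apply: (congr1 flatten); apply: eq_map => i.
by rewrite (IH f2) // ?(leq_trans (leq_subr _ _)).
Qed.

Lemma forestsS m : forests m.+1 =
  flatten [seq [seq t :: ts | t <- cls i.+1, ts <- forests (m - i)]
          | i <- iota 0 m.+1].
Proof.
rewrite /forests forests_fuelS; apply: (congr1 flatten); apply: eq_map => i.
by rewrite (@forests_fuel_enough m (m - i)) ?leq_subr.
Qed.

Hypothesis cls_size : forall n t, t \in cls n -> tsize t = n.
Hypothesis cls_uniq : forall n, uniq (cls n).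

Lemma forests_mem m ts : ts \in forests m <->
  sumn (map tsize ts) = m /\ all (fun t => t \in cls (tsize t)) ts.
Proof.
elim/ltn_ind: m ts => -[|m] IH ts.
  rewrite /forests /= inE; split => [/eqP -> //|[]].
  by case: ts => [|t ts] //= size_ts; have := tsize_gt0 t; lia.
rewrite forestsS; split.
  case/flattenP => _ /mapP [i i_in ->] /flattenP [_ /mapP [t t_in ->]] /mapP [ts' ts'_in ->].
  rewrite mem_iota in i_in; have t_size := cls_size _ _ t_in.
  have [size_ts' all_ts'] := (IH (m - i)%N ltac:(lia) ts').1 ts'_in.
  by rewrite /= t_size t_in size_ts'; split => //; lia.
case: ts => [|t ts] [] // size_ts /andP [t_in all_ts]; rewrite /= in size_ts.
have := tsize_gt0 t; case def_t: (tsize t) => [//|i] _.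
apply/flattenP; exists [seq t :: ts | t <- cls i.+1, ts <- forests (m - i)].
  by apply/mapP; exists i => //; rewrite mem_iota; lia.
apply/flattenP; exists [seq t :: ts | ts <- forests (m - i)].
  by apply/mapP; exists t => //; rewrite -def_t.
apply: map_f; apply/(IH (m - i)%N ltac:(lia)); split => //; lia.
Qed.

Lemma forests_uniq m : uniq (forests m).
Proof.
elim/ltn_ind: m => -[|m] IH //; rewrite forestsS.
set B := fun i => [seq t :: ts | t <- cls i.+1, ts <- forests (m - i)].
have -> : flatten [seq B i | i <- iota 0 m.+1] = [seq x | i <- iota 0 m.+1, x <- B i].
  by apply: (congr1 flatten); apply: eq_map => i; rewrite map_id.
apply: allpairs_uniq_dep => [|i|]; first exact: iota_uniq.
  rewrite mem_iota => i_lt; apply: allpairs_uniq => //; first by apply: IH; lia.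
  by move=> [t ts] [t' ts'] _ _ [-> ->].
move=> [i x] [j y] /allpairsPdep [i' [x' [_ x'_in [-> ->]]]].
move=> /allpairsPdep [j' [y' [_ y'_in [-> ->]]]] /= eq_xy; subst y'.
case/allpairsP: x'_in => -[t ts] /= [t_in _ def_x].
case/allpairsP: y'_in => -[t' ts'] /= [t'_in _ def_y].
move: t_in t'_in; rewrite def_x in def_y; case: def_y => <- _.
by move=> /cls_size size_i /cls_size; rewrite size_i => -[->].
Qed.

Lemma size_forestsS m : size (forests m.+1) =
  (\sum_(i < m.+1) size (cls i.+1) * size (forests (m - i)))%N.
Proof.
rewrite forestsS size_flatten sumnE !big_map.
rewrite (_ : iota 0 m.+1 = index_iota 0 m.+1) // big_mkord.
by apply: eq_bigr => i _; rewrite size_allpairs.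
Qed.

Lemma forests_series :
  count_series forests = finv (fsub (fconst 1) (count_series cls)).
Proof.
have cls0 := sized_nil0 cls_size.
apply: finv_uniq; first by rewrite one_sub_coef0 // /count_series cls0.
have -> : fmul (fsub (fconst 1) (count_series cls)) (count_series forests) =
  fsub (count_series forests) (fmul (count_series cls) (count_series forests)) by ring.
apply: fps_ext => -[|m].
  by rewrite /fsub /fadd /fopp fmul_coef0 /count_series cls0 mul0r oppr0 addr0.
rewrite /fsub /fadd /fopp /fmul big_ord_recl /count_series cls0 mul0r add0r.
rewrite size_forestsS natr_sum /fconst /=.
by under eq_bigr => i _ do rewrite natrM; rewrite subrr.
Qed.

End Forests.

(* Trees of size m whose root has as subtrees a forest from the family e,
   required to be nonempty when b is false (a root at even depth is no leaf). *)
Definition grow (b : bool) (e : nat -> seq ptree) (m : nat) : seq ptree :=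
  if m is m'.+1 then [seq Node ts | ts <- forests e m' & b || (ts != [::])]
  else [::].

Section Grow.
Variable e : nat -> seq ptree.
Hypothesis e_size : forall n t, t \in e n -> tsize t = n.

Lemma grow_mem b (P : pred ptree) :
  (forall n t, t \in e n <-> tsize t = n /\ P t) ->
  forall m t, t \in grow b e m <->
    tsize t = m /\ (let: Node ts := t in (b || (ts != [::])) && all P ts).
Proof.
move=> e_spec m t.
case: m t => [|m] [ts]; first by split=> // -[] /=.
have all_e : all (fun t => t \in e (tsize t)) ts = all P ts.
  by apply: eq_all => t; apply/idP/idP => [/e_spec [] | P_t] //; apply/e_spec.
rewrite /= (mem_map Node_inj) mem_filter; split.
  by case/andP => -> /(forests_mem _ e_size) [<-]; rewrite all_e.
case=> -[size_ts] /andP [-> all_P]; apply/(forests_mem _ e_size).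
by rewrite all_e.
Qed.

Lemma grow_uniq b m : (forall n, uniq (e n)) -> uniq (grow b e m).
Proof.
case: m => [//|m] e_uniq.
by rewrite map_inj_uniq ?filter_uniq ?forests_uniq //; exact: Node_inj.
Qed.

Lemma grow_series b : count_series (grow b e) =
  fmul fX (if b then count_series (forests e)
           else fsub (count_series (forests e)) (fconst 1)).
Proof.
apply: fps_ext => -[|m]; first by rewrite fmulX_coef0.
rewrite fmulX_coefS /count_series size_map size_filter.
case: b; first by rewrite count_predT.
rewrite /fsub /fadd /fopp /fconst; case: m => [|m] /=; first by rewrite subrr.
suff : all (fun ts => ts != [::]) (forests e m.+1).
  by rewrite all_count => /eqP ->; rewrite subr0.
apply/allP => ts /(forests_mem _ e_size) [size_ts _].
by case: ts size_ts.
Qed.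

Lemma grow_series_odd :
  count_series (grow true e) = fdiv fX (fsub (fconst 1) (count_series e)).
Proof. by rewrite grow_series (forests_series _ e_size). Qed.

Lemma grow_series_even (g := count_series e) :
  count_series (grow false e) = fdiv (fmul fX g) (fsub (fconst 1) g).
Proof.
have g0 : (fsub (fconst 1) g) 0%N != 0.
  by rewrite one_sub_coef0 // /g /count_series (sized_nil0 e_size).
rewrite grow_series (forests_series _ e_size) /fdiv -/g.
transitivity (fmul fX (fsub (finv (fsub (fconst 1) g))
                            (fmul (fsub (fconst 1) g) (finv (fsub (fconst 1) g))))).
  by rewrite fmul_finv.
by ring.
Qed.

End Grow.

Fixpoint trees (h : nat) (b : bool) : nat -> seq ptree :=
  if h is h'.+1 then grow b (trees h' (~~ b)) else fun _ => [::].

Lemma trees_mem h b n t : t \in trees h b n <->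
  tsize t = n /\ leaves_odd_from b t && (theight t < h)%N.
Proof.
elim: h b n t => [|h IH] b n t; first by rewrite ltn0 andbF; split => // -[].
pose P c := leaves_odd_from (~~ b) c && (theight c < h)%N.
have trees_size m c : c \in trees h (~~ b) m -> tsize c = m by case/IH.
apply: iff_trans (@grow_mem _ trees_size b P (IH (~~ b)) n t) _; case: t => ts.
rewrite leaves_odd_node oddb height_node -andbA -all_predI.
by rewrite (@eq_all _ _ P) => [|c] //; rewrite /= leaves_odd_succ.
Qed.

Lemma trees_size h b n t : t \in trees h b n -> tsize t = n.
Proof. by case/trees_mem. Qed.

Lemma trees_uniq h b n : uniq (trees h b n).
Proof. by elim: h b n => // h IH b n; apply: grow_uniq => //; exact: trees_size. Qed.

Lemma treesS h b : trees h.+1 b = grow b (trees h (~~ b)).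
Proof. by []. Qed.

Lemma trees_series_odd j : count_series (trees (2 * j).+1 true) = Gs j.
Proof.
elim: j => [|j IH].
  have trees0 : count_series (trees 0 false) = fconst 0.
    by apply: fps_ext => n; rewrite /count_series /fconst; case: eqP.
  rewrite treesS grow_series_odd ?trees0 //.
  rewrite (_ : fsub (fconst 1) (fconst 0) = fconst 1); last by ring.
  by rewrite /fdiv finv1 fmulC fmul1.
have -> : ((2 * j.+1).+1 = (2 * j).+3)%N by rewrite mulnS.
rewrite treesS grow_series_odd; last exact: trees_size.
by rewrite treesS grow_series_even ?IH //; exact: trees_size.
Qed.

Lemma trees_series_even j : count_series (trees (2 * j.+1) false) = F j.+1.
Proof.
have -> : (2 * j.+1 = (2 * j).+2)%N by rewrite mulnS.
by rewrite treesS grow_series_even ?trees_series_odd //; exact: trees_size.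
Qed.

Lemma counted_trees j n t : counted j.+1 n t <-> t \in trees (2 * j.+1) false n.
Proof.
rewrite trees_mem; split => [[<- _ odd_t height_t] | [<- /andP [odd_t height_t]]].
  split => //; apply/andP; split => //; lia.
by split => //; [exact: leaves_odd_size | lia].
Qed.

Theorem mainTheorem2 (v : fps) :
  v 0%N = 0 ->
  fX = fdiv v (fadd (fadd (fconst 1) v) (fpow v 2)) ->
  forall k : nat, (1 <= k)%N ->
    [/\ G k = fmul (fdiv v (fadd (fconst 1) v))
                   (fdiv (fsub (fconst 1) (fpow v (2 * k)))
                         (fsub (fconst 1) (fpow v (2 * k).+1))),
        F k = fmul (fdiv (fpow v 2) (fadd (fadd (fconst 1) v) (fpow v 2)))
                   (fdiv (fsub (fconst 1) (fpow v (2 * k)))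
                         (fsub (fconst 1) (fpow v (2 * k).+2)))
      & forall n : nat, exists N : nat,
          F k n = N%:R /\
          exists f : 'I_N -> ptree,
            injective f /\ (forall t, counted k n t <-> exists i, f i = t)].
Proof.
move=> v0 z_def [|j] // _.
have one_sub_pow m : fsub (fconst 1) (fpow v m.+1) 0%N != 0.
  by rewrite one_sub_coef0 ?fpow_coef0.
split.
- apply: (fdiv_cross _ _ (closed_G _ v0 z_def j)); last exact: one_sub_pow.
  exact: one_add_v_coef0.
- apply: (fdiv_cross _ _ (closed_F _ v0 z_def j)); last exact: one_sub_pow.
  by rewrite Q_coef0 ?oner_neq0.
move=> n; set s := trees (2 * j.+1) false n.
have [nth_inj nth_enum] :=
  uniq_enumeration _ (Node [::]) _ (trees_uniq (2 * j.+1) false n).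
exists (size s); split; first by rewrite -trees_series_even.
exists (fun i => nth (Node [::]) s i); split => // t.
by rewrite counted_trees nth_enum.
Qed.
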